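(* In the fermionic setting described in the context, if $g\in\mathrm{SO}_*(V)$ then the Gaussian vector $f_{T_g}\in\mathcal F(V)$ satisfies $$a_{gJg^{-1}}(gv)\,f_{T_g}=0\quad\text{for all }v\in V,$$ where $a_{gJg^{-1}}(gv)=\tfrac12\bigl(\psi(gv)+i\,\psi(gJv)\bigr)$.
   Context: Let $V$ be a real vector space of dimension $2m$ with a positive definite symmetric bilinear form $d$ and a real-linear $J$ with $J^2=-1$ and $d(Ju,Jv)=d(u,v)$. Put $s(u,v):=d(Ju,v)$; make $V$ a complex vector space by $(a+bi)v:=av+bJv$ with Hermitian inner product $\langle u|v\rangle:=d(u,v)+is(u,v)$ (antilinear in $u$). $A^t$ is the $d$-transpose. For $g\in\mathrm{SO}(V)$ let $p_g:=\tfrac12(g-JgJ)$, $q_g:=\tfrac12(g+JgJ)$; $\mathrm{SO}_*(V)$ is the set of $g\in\mathrm{SO}(V)$ with $p_g$ invertible, and for such $g$, $T_g:=q_gp_g^{-1}$ (antilinear and $d$-skew-symmetric). The fermionic Fock space $\mathcal F(V)$ is the exterior algebra $\Lambda(V)$ of the complex space $V$ with inner product $\langle u_1\wedge\dots\wedge u_k|v_1\wedge\dots\wedge v_l\rangle=\delta_{kl}\det[\langle u_i|v_j\rangle]$ and unit vacuum $\Omega\in\Lambda^0$. Creation: $a^\dagger(v)\xi:=v\wedge\xi$; annihilation: $a(v)(v_1\wedge\dots\wedge v_k):=\sum_j(-1)^{j-1}\langle v|v_j\rangle v_1\wedge\dots\widehat{v_j}\dots\wedge v_k$, $a(v)\Omega=0$;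 field $\psi(v):=a^\dagger(v)+a(v)$. For a complex structure $K$ on $V$, $a_K(w):=\tfrac12(\psi(w)+i\psi(Kw))$. For an antilinear $d$-skew-symmetric $T$ and an orthonormal basis $e_1,\dots,e_m$ of $V$, $H_T:=\sum_{i,j}\langle e_i|Te_j\rangle e_i\wedge e_j$ and the Gaussian is $f_T:=\sum_{0\le 2r\le m}\frac{1}{2^rr!}H_T^{\wedge r}$ (independent of the basis). *)

From HB Require Import structures.
From mathcomp Require Import all_boot all_order all_algebra.
From mathcomp Require Import reals complex.
Set Implicit Arguments. Unset Strict Implicit. Unset Printing Implicit Defensive.
Import Order.TTheory GRing.Theory Num.Theory.
Local Open Scope ring_scope.
Local Open Scope complex_scope.

(* The real vector space V of dimension 2m is modelled as 'cV[R]_(2m)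
   (column vectors); real-linear maps on V are (2m x 2m) real matrices acting
   on the left.  d is given by a matrix D: d(u,v) = u^T D v. *)
Section Fermion.
Variables (R : realType) (m : nat).
Notation V := 'cV[R]_(m + m).
Notation C := (R[i]).

Definition dform (D : 'M[R]_(m + m)) (u v : V) : R := (u^T *m D *m v) 0 0.

Definition pos_def_sym (D : 'M[R]_(m + m)) : Prop :=
  D^T = D /\ forall v : V, v != 0 -> 0 < dform D v v.

Definition compl_struct (D J : 'M[R]_(m + m)) : Prop :=
  J *m J = - 1%:M /\ forall u v : V, dform D (J *m u) (J *m v) = dform D u v.

Definition sform (D J : 'M[R]_(m + m)) (u v : V) : R := dform D (J *m u) v.
Definition herm (D J : 'M[R]_(m + m)) (u v : V) : C :=
  (dform D u v)%:C + 'i * (sform D J u v)%:C.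

Definition in_SO (D g : 'M[R]_(m + m)) : Prop :=
  (forall u v : V, dform D (g *m u) (g *m v) = dform D u v) /\ \det g = 1.

Definition p_of (J g : 'M[R]_(m + m)) : 'M[R]_(m + m) := 2%:R^-1 *: (g - J *m g *m J).
Definition q_of (J g : 'M[R]_(m + m)) : 'M[R]_(m + m) := 2%:R^-1 *: (g + J *m g *m J).
Definition in_SOstar (D J g : 'M[R]_(m + m)) : Prop :=
  in_SO D g /\ p_of J g \in unitmx.
Definition T_of (J g : 'M[R]_(m + m)) : 'M[R]_(m + m) := q_of J g *m invmx (p_of J g).

Definition fk_orthonormal (D J : 'M[R]_(m + m)) (e : 'I_m -> V) : Prop :=
  forall i j, herm D J (e i) (e j) = (i == j)%:R.

(* Fock space Lambda(V), in coordinates w.r.t. the fk_orthonormal basis e: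
   the coordinate at S = {s_1 < ... < s_k} is the coefficient of
   e_{s_1} /\ ... /\ e_{s_k}. *)
Definition Fock := {ffun {set 'I_m} -> C}.

Definition fscale (c : C) (x : Fock) : Fock := [ffun S => c * x S].

(* sign of e_S /\ e_T = wsign S T * e_{S u T}, for disjoint S, T *)
Definition wsign (S T : {set 'I_m}) : C :=
  (-1) ^+ #|[set p : 'I_m * 'I_m | [&& p.1 \in S, p.2 \in T & (p.2 < p.1)%N]]|.

Definition wedge (x y : Fock) : Fock :=
  [ffun U => \sum_(S : {set 'I_m}) \sum_(T : {set 'I_m} | [disjoint S & T] && (S :|: T == U))
       wsign S T * x S * y T].

Definition vacuum : Fock := [ffun S => (S == set0)%:R].

(* a vector v of V, viewed in Lambda^1(V) = V: coefficients <e_i|v> *)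
Definition embed (D J : 'M[R]_(m + m)) (e : 'I_m -> V) (v : V) : Fock :=
  [ffun S => \sum_(i : 'I_m) (S == [set i])%:R * herm D J (e i) v].

Definition creation (D J : 'M[R]_(m + m)) (e : 'I_m -> V) (v : V) (xi : Fock) : Fock := wedge (embed D J e v) xi.

(* a(v)(e_{s_1}/\.../\e_{s_k}) = sum_j (-1)^(j-1) <v|e_{s_j}> e_S without s_j *)
Definition annihilation (D J : 'M[R]_(m + m)) (e : 'I_m -> V) (v : V) (xi : Fock) : Fock :=
  [ffun U : {set 'I_m} => \sum_(j : 'I_m | j \notin U)
      (-1) ^+ #|[set s in U | (s < j)%N]| * herm D J v (e j) * xi (j |: U)].

Definition field (D J : 'M[R]_(m + m)) (e : 'I_m -> V) (v : V) (xi : Fock) : Fock :=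
  creation D J e v xi + annihilation D J e v xi.

Definition a_K (D J : 'M[R]_(m + m)) (e : 'I_m -> V) (K : 'M[R]_(m + m)) (w : V) (xi : Fock) : Fock :=
  fscale (2%:R^-1) (field D J e w xi + fscale 'i (field D J e (K *m w) xi)).

Definition H_T (D J : 'M[R]_(m + m)) (e : 'I_m -> V) (T : 'M[R]_(m + m)) : Fock :=
  \sum_(i : 'I_m) \sum_(j : 'I_m)
     fscale (herm D J (e i) (T *m e j)) (wedge (embed D J e (e i)) (embed D J e (e j))).

Definition wpow (x : Fock) (r : nat) : Fock := iter r (wedge x) vacuum.

Definition gaussian (D J : 'M[R]_(m + m)) (e : 'I_m -> V) (T : 'M[R]_(m + m)) : Fock :=
  \sum_(r < m./2.+1) fscale ((2 ^ r * r`!)%:R^-1) (wpow (H_T D J e T) r).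

End Fermion.

(* In the orthonormal basis e_1, ..., e_m the operators cre k = e_k /\ _
   and ann k = a(e_k) satisfy the canonical anticommutation relations.  Put
   A_ij = <e_i|T e_j>; since T is antilinear and d-skew, A is skew-symmetric, and
   exterior multiplication by H = sum_ij A_ij e_i /\ e_j commutes with every cre l,
   while [ann k, H /\ _] = 2 sum_j A_kj e_j /\ _.  Hence
   ann k (H^(r+1)) = 2(r+1) (sum_j A_kj e_j) /\ H^r, and as H^r = 0 once 2r > m, the
   truncated exponential f_T = sum_r H^r / (2^r r!) satisfies
   ann k f_T = (sum_j A_kj e_j) /\ f_T exactly.  Finally a_{gJg^-1}(gv) is creation
   by q_g v = T_g (p_g v) plus annihilation by p_g v; with z_j = <p_g v|e_j> its
   creation coefficients are sum_j A_ij z_j, so applied to f_T the two parts add up to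
   sum_ij (A_ij + A_ji) z_j e_i /\ f_T = 0. *)

From HB Require Import structures.
From mathcomp Require Import all_boot all_order all_algebra.
From mathcomp Require Import reals complex.
From mathcomp Require Import ring zify.
Set Implicit Arguments. Unset Strict Implicit. Unset Printing Implicit Defensive.
Import Order.TTheory GRing.Theory Num.Theory.
Local Open Scope ring_scope.

Section FockOperators.
Variables (R : realType) (m : nat).
Local Notation C := R[i].
Local Notation F := (Fock R m).
Local Notation set := {set 'I_m}.
Local Notation wsign := (@wsign R m).

Lemma fockDE (x y : F) (U : set) : (x + y) U = x U + y U.
Proof. exact: ffunE. Qed.

Lemma fockZE c (x : F) (U : set) : (c *: x) U = c * x U.
Proof. exact: ffunE. Qed.

Definition sign_below (U : set) (k : 'I_m) : C := (-1) ^+ #|[set t in U | (t < k)%N]|.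

Lemma sign_below_setU1 (U : set) k l : k \notin U ->
  sign_below (k |: U) l = (-1) ^+ (k < l)%N * sign_below U l.
Proof.
move=> kU; rewrite /sign_below -exprD; congr (_ ^+ _).
have [kl|lk] := ltnP k l.
  have -> : [set t in k |: U | (t < l)%N] = k |: [set t in U | (t < l)%N].
    by apply/setP=> t; rewrite !inE; case: eqP => [->|] //=; rewrite kl.
  by rewrite cardsU1 !inE (negbTE kU) kl.
congr #|pred_of_set _|; apply/setP=> t; rewrite !inE.
by case: eqP => [->|] //=; rewrite ltnNge lk (negbTE kU).
Qed.

Lemma sign_below_setD1 (U : set) k l : k \in U ->
  sign_below U l = (-1) ^+ (k < l)%N * sign_below (U :\ k) l.
Proof. by move=> kU; rewrite -sign_below_setU1 ?setD11 // setD1K. Qed.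

Lemma sign_below_sqr (U : set) k : sign_below U k * sign_below U k = 1.
Proof. by rewrite /sign_below -exprMn mulrNN mulr1 expr1n. Qed.

Lemma sign_below_set1 j k : sign_below [set j] k = (-1) ^+ (j < k)%N.
Proof.
rewrite -(setU0 [set j]) sign_below_setU1 ?inE // /sign_below.
by rewrite (_ : [set t in set0 | _] = set0) ?cards0 ?mulr1 //; apply/setP => t; rewrite !inE.
Qed.

Lemma big_disjoint_setU (S U : set) (G : set -> C) :
  \sum_(T : set | [disjoint S & T] && (S :|: T == U)) G T = (S \subset U)%:R * G (U :\: S).
Proof.
have split_U (T : set) : ([disjoint S & T] && (S :|: T == U)) = (S \subset U) && (T == U :\: S).
  apply/andP/andP => [[dST /eqP <-]|[SU /eqP ->]].
    by rewrite subsetUl setDUl setDv set0U; split=> //; apply/eqP/esym/setDidPl; rewrite disjoint_sym.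
  split; last by apply/eqP; rewrite -[in RHS](setID U S) (setIidPr SU).
  by rewrite -setI_eq0 setDE setICA setICr setI0.
rewrite (eq_bigl _ _ split_U); have [SU|nSU] /= := boolP (S \subset U).
  by rewrite big_pred1_eq mul1r.
by rewrite big_pred0 // mul0r.
Qed.

Lemma wsign_setU1 (S T : set) k : k \notin S ->
  wsign (k |: S) T = sign_below T k * wsign S T.
Proof.
move=> kS; rewrite /wsign /sign_below -exprD; congr (_ ^+ _).
pose P := [set p : 'I_m * 'I_m | [&& p.1 \in S, p.2 \in T & (p.2 < p.1)%N]].
have -> : [set p : 'I_m * 'I_m | [&& p.1 \in k |: S, p.2 \in T & (p.2 < p.1)%N]]
    = (pair k @: [set t in T | (t < k)%N]) :|: P.
  apply/setP => [[a b]]; rewrite !inE /=; apply/and3P/orP.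
    case=> /orP [/eqP ->|aS] bT ba; last by right; rewrite aS bT ba.
    by left; apply/imsetP; exists b; rewrite // inE bT ba.
  case=> [/imsetP [t] | /and3P [aS bT ba]]; last by rewrite aS orbT.
  by rewrite inE => /andP [tT tk] [-> ->]; rewrite eqxx tT tk.
rewrite cardsU card_imset; last by move=> x y [].
suff -> : pair k @: [set t in T | (t < k)%N] :&: P = set0 by rewrite cards0 subn0.
apply/setP => [[a b]]; rewrite !inE /=; apply/negbTE/andP => [[/imsetP [t _] [-> _]]].
by rewrite (negbTE kS).
Qed.

Lemma wsign_set1 (T : set) k : wsign [set k] T = sign_below T k.
Proof.
rewrite -(setU0 [set k]) wsign_setU1 ?inE // /wsign.
by rewrite (_ : [set p | _ & _] = set0) ?cards0 ?mulr1 //; apply/setP => p; rewrite !inE.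
Qed.

Definition fock_basis (k : 'I_m) : F := [ffun S : set => (S == [set k])%:R].

Definition cre (k : 'I_m) (y : F) : F := wedge (fock_basis k) y.

Definition ann (k : 'I_m) (y : F) : F :=
  [ffun U : set => (k \notin U)%:R * sign_below U k * y (k |: U)].

Lemma creE k y (U : set) : cre k y U = (k \in U)%:R * sign_below U k * y (U :\ k).
Proof.
rewrite ffunE (bigD1 [set k]) //= [X in _ + X]big1 => [|S nS]; last first.
  by rewrite big1 // => T _; rewrite ffunE (negbTE nS) mulr0 mul0r.
under eq_bigr do rewrite ffunE eqxx mulr1.
rewrite addr0 big_disjoint_setU sub1set wsign_set1.
have [kU|] := boolP (k \in U); last by rewrite !mul0r.
by rewrite (sign_below_setD1 k kU) ltnn expr0 !mul1r.
Qed.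

Lemma annE k y (U : set) : ann k y U = (k \notin U)%:R * sign_below U k * y (k |: U).
Proof. exact: ffunE. Qed.

Lemma cre_is_linear k : linear (cre k).
Proof.
by move=> c x y; apply/ffunP => U; rewrite !(creE, fockDE, fockZE); ring.
Qed.
HB.instance Definition _ k := GRing.isLinear.Build C F F *:%R (cre k) (cre_is_linear k).

Lemma ann_is_linear k : linear (ann k).
Proof.
by move=> c x y; apply/ffunP => U; rewrite !(annE, fockDE, fockZE); ring.
Qed.
HB.instance Definition _ k := GRing.isLinear.Build C F F *:%R (ann k) (ann_is_linear k).

Lemma ann_vacuum k : ann k (vacuum R m) = 0.
Proof.
apply/ffunP => U; rewrite annE !ffunE.
suff /negbTE -> : k |: U != set0 by rewrite mulr0.
by apply/set0Pn; exists k; rewrite setU11.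
Qed.

Lemma ltn_xor (k l : 'I_m) : k != l -> ((k < l)%N + (l < k)%N = 1)%N.
Proof. by case: ltngtP => // /val_inj ->; rewrite eqxx. Qed.

Lemma ann_cre k l y : ann k (cre l y) + cre l (ann k y) = (k == l)%:R *: y.
Proof.
apply/ffunP => U; rewrite fockDE fockZE annE !creE annE.
have [<-|kl] := eqVneq k l.
  rewrite !inE eqxx /= mul1r.
  have [kU|kU] /= := boolP (k \in U).
    rewrite (setD1K kU) (sign_below_setD1 k kU) ltnn expr0 mul1r.
    by rewrite !mul0r add0r !mul1r mulrA sign_below_sqr mul1r.
  rewrite (sign_below_setU1 k kU) ltnn expr0 mul1r setU1K //.
  by rewrite !mul0r addr0 !mul1r mulrA sign_below_sqr mul1r.
have lkU : (l \in k |: U) = (l \in U) by rewrite !inE eq_sym (negbTE kl).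
have kUl : (k \notin U :\ l) = (k \notin U) by rewrite !inE kl.
have kUl' : (k |: U) :\ l = k |: (U :\ l).
  by apply/setP => t; rewrite !inE; case: (eqVneq t k) => [->|] //=; rewrite kl.
rewrite lkU kUl kUl'; have [kU|kU] /= := boolP (k \in U); first by ring.
have [lU|lU] /= := boolP (l \in U); last by ring.
rewrite (sign_below_setU1 l kU) (sign_below_setD1 k lU).
by move: (ltn_xor kl); case: (k < l)%N; case: (l < k)%N => //= _; ring.
Qed.

Lemma cre_cre k l y : cre k (cre l y) = - cre l (cre k y).
Proof.
apply/eqP; rewrite -addr_eq0; apply/eqP/ffunP => U; rewrite fockDE !creE ffunE.
have [<-|kl] := eqVneq k l; first by rewrite !inE eqxx /= !mul0r mulr0 addr0.
have lUk : (l \in U :\ k) = (l \in U) by rewrite !inE eq_sym kl.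
have kUl : (k \in U :\ l) = (k \in U) by rewrite !inE kl.
rewrite lUk kUl [U :\ l :\ k]setDDl setUC -setDDl.
have [kU|] /= := boolP (k \in U); last by rewrite !mul0r add0r mulr0.
have [lU|] /= := boolP (l \in U); last by rewrite !mul0r addr0 mulr0.
rewrite (sign_below_setD1 l kU) (sign_below_setD1 k lU).
by move: (ltn_xor kl); case: (k < l)%N; case: (l < k)%N => //= _; ring.
Qed.

Lemma cre_basisE i j (S : set) :
  cre i (fock_basis j) S = (S == [set i; j])%:R * (i != j)%:R * (-1) ^+ (j < i)%N.
Proof.
rewrite creE ffunE; have [<-|ij] := eqVneq i j.
  rewrite (_ : (S :\ i == [set i]) = false) ?mulr0 ?mul0r //.
  by apply/eqP => E; move: (set11 i); rewrite -E setD11.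
have [iS|iS] /= := boolP (i \in S); last first.
  suff /negbTE -> : S != [set i; j] by rewrite !mul0r.
  by apply: contraNneq iS => ->; rewrite setU11.
have -> : (S :\ i == [set j]) = (S == [set i; j]).
  apply/idP/idP => /eqP E; apply/eqP; first by rewrite -E setD1K.
  by rewrite E setU1K // inE.
have [->|] := eqP; last by rewrite !mulr0 !mul0r.
by rewrite sign_below_setU1 ?inE // sign_below_set1 ltnn expr0 !mul1r !mulr1.
Qed.

Lemma wedgeDl (x x' y : F) : wedge (x + x') y = wedge x y + wedge x' y.
Proof.
apply/ffunP => U; rewrite !ffunE -big_split; apply: eq_bigr => S _.
by rewrite -big_split; apply: eq_bigr => T _; rewrite fockDE mulrDr mulrDl.
Qed.

Lemma wedgeZl c (x y : F) : wedge (c *: x) y = c *: wedge x y.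
Proof.
apply/ffunP => U; rewrite fockZE !ffunE mulr_sumr; apply: eq_bigr => S _.
by rewrite mulr_sumr; apply: eq_bigr => T _; rewrite fockZE; ring.
Qed.

Lemma wedge_suml I (r : seq I) (P : pred I) (G : I -> F) y :
  wedge (\sum_(i <- r | P i) G i) y = \sum_(i <- r | P i) wedge (G i) y.
Proof.
have wedge0l : wedge 0 y = 0 by rewrite -[0 in LHS](scale0r (0 : F)) wedgeZl scale0r.
exact: (big_morph (fun x => wedge x y) (fun x x' => wedgeDl x x' y) wedge0l).
Qed.

Lemma wedge_cre_basis i j y : wedge (cre i (fock_basis j)) y = cre i (cre j y).
Proof.
apply/ffunP => U; rewrite [LHS]ffunE (bigD1 [set i; j]) //= [X in _ + X]big1 => [|S nS].
  under eq_bigr do rewrite cre_basisE eqxx mul1r.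
  rewrite addr0 big_disjoint_setU !creE; have [<-|ij] := eqVneq i j.
    by rewrite !inE eqxx /= !(mul0r, mulr0).
  rewrite wsign_setU1 ?inE // wsign_set1 subUset !sub1set -setDDl.
  have [iU|] /= := boolP (i \in U); last by rewrite !mul0r.
  have [jU|jU] := boolP (j \in U); last by rewrite andbF !(mul0r, mulr0).
  have jUi : j \in U :\ i by rewrite !inE eq_sym ij.
  rewrite eq_sym ij (sign_below_setD1 i iU) (sign_below_setD1 i jUi).
  by rewrite (sign_below_setD1 j jUi) !ltnn; ring.
by apply: big1 => T _; rewrite cre_basisE (negbTE nS) !mul0r mulr0 mul0r.
Qed.

Lemma ann_cre_cre k i j y : ann k (cre i (cre j y)) =
  cre i (cre j (ann k y)) + ((k == i)%:R *: cre j y - (k == j)%:R *: cre i y).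
Proof.
have annC l x : ann k (cre l x) = (k == l)%:R *: x - cre l (ann k x).
  by rewrite -(ann_cre k l x) addrK.
by rewrite !annC !linearB !linearZ /= scalerN opprK addrA addrC.
Qed.

Definition homogeneous n (x : F) := forall S : set, #|S| != n -> x S = 0.

Lemma homogeneous_vacuum : homogeneous 0 (vacuum R m).
Proof. by move=> S; rewrite ffunE cards_eq0 => /negbTE ->. Qed.

Lemma homogeneous_cre k n x : homogeneous n x -> homogeneous n.+1 (cre k x).
Proof.
move=> hx S nS; rewrite creE; have [kS|] := boolP (k \in S); last by rewrite !mul0r.
by rewrite hx ?mulr0 //; move: nS; rewrite (cardsD1 k S) kS add1n eqSS.
Qed.

Lemma homogeneous_eq0 n x : (m < n)%N -> homogeneous n x -> x = 0.
Proof.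
move=> mn hx; apply/ffunP => S; rewrite ffunE hx // neq_ltn.
by rewrite (leq_ltn_trans _ mn) // -[m in (_ <= m)%N]card_ord max_card.
Qed.

End FockOperators.

Lemma scalerC (K : comPzRingType) (M : lmodType K) (a b : K) (v : M) :
  a *: (b *: v) = b *: (a *: v).
Proof. by rewrite !scalerA mulrC. Qed.

Lemma sum_delta (I : finType) (K : pzRingType) (M : lmodType K) (k : I) (G : I -> M) :
  \sum_i (k == i)%:R *: G i = G k.
Proof.
rewrite (bigD1 k) //= eqxx scale1r big1 ?addr0 // => i ik.
by rewrite eq_sym (negbTE ik) scale0r.
Qed.

Lemma gaussian_coefS (K : numFieldType) r :
  (2 ^ r.+1 * r.+1`!)%:R^-1 * (2 * r.+1)%N%:R = (2 ^ r * r`!)%:R^-1 :> K.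
Proof.
have -> : (2 ^ r.+1 * r.+1`! = 2 ^ r * r`! * (2 * r.+1))%N by rewrite expnS factS; ring.
by rewrite natrM invfM -mulrA mulVf ?mulr1 // pnatr_eq0.
Qed.

Section PairCreation.
Variables (R : realType) (m : nat) (A : 'I_m -> 'I_m -> R[i]).
Local Notation C := R[i].
Local Notation F := (Fock R m).
Local Notation vac := (vacuum R m).

Definition pair_cre (y : F) : F := \sum_i \sum_j A i j *: cre i (cre j y).

Definition row_cre (k : 'I_m) (y : F) : F := \sum_j A k j *: cre j y.

Lemma pair_cre_is_linear : linear pair_cre.
Proof.
move=> c x y; rewrite /pair_cre scaler_sumr -big_split; apply: eq_bigr => i _.
rewrite scaler_sumr -big_split; apply: eq_bigr => j _.
by rewrite !linearP.
Qed.
HB.instance Definition _ := GRing.isLinear.Build C F F *:%R pair_cre pair_cre_is_linear.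

Lemma row_cre_is_linear k : linear (row_cre k).
Proof.
move=> c x y; rewrite /row_cre scaler_sumr -big_split; apply: eq_bigr => j _.
by rewrite !linearP.
Qed.
HB.instance Definition _ k := GRing.isLinear.Build C F F *:%R (row_cre k) (row_cre_is_linear k).

Lemma ann_pair_cre k y :
  ann k (pair_cre y) = pair_cre (ann k y) + \sum_j (A k j - A j k) *: cre j y.
Proof.
rewrite /pair_cre linear_sum.
transitivity (\sum_i \sum_j (A i j *: cre i (cre j (ann k y))
    + ((k == i)%:R *: (A i j *: cre j y) - (k == j)%:R *: (A i j *: cre i y)))).
  apply: eq_bigr => i _; rewrite linear_sum; apply: eq_bigr => j _.
  rewrite linearZ /= ann_cre_cre scalerDr scalerBr.
  by rewrite (scalerC (A i j) (k == i)%:R) (scalerC (A i j) (k == j)%:R).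
under eq_bigr do rewrite big_split sumrB [X in _ - X]sum_delta.
rewrite big_split sumrB /= [X in _ + (X - _)]exchange_big /=.
under [X in _ + (X - _)]eq_bigr do rewrite sum_delta.
by congr (_ + _); rewrite -sumrB; apply: eq_bigr => j _; rewrite scalerBl.
Qed.

Lemma cre_pair_cre l y : cre l (pair_cre y) = pair_cre (cre l y).
Proof.
rewrite /pair_cre linear_sum; apply: eq_bigr => i _; rewrite linear_sum.
by apply: eq_bigr => j _; rewrite linearZ /= cre_cre (cre_cre j) !linearN.
Qed.

Lemma row_cre_pair_cre k y : row_cre k (pair_cre y) = pair_cre (row_cre k y).
Proof. by rewrite /row_cre linear_sum; apply: eq_bigr => j _; rewrite linearZ cre_pair_cre. Qed.

Hypothesis A_skew : forall i j, A j i = - A i j.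

Lemma ann_pair_cre_skew k y : ann k (pair_cre y) = pair_cre (ann k y) + 2%:R *: row_cre k y.
Proof.
rewrite ann_pair_cre scaler_sumr; congr (_ + _); apply: eq_bigr => j _.
by rewrite (A_skew k j) opprK scalerA mulr_natl mulr2n.
Qed.

Lemma ann_pair_cre_iter k r :
  ann k (iter r.+1 pair_cre vac) = (2 * r.+1)%N%:R *: row_cre k (iter r pair_cre vac).
Proof.
elim: r => [|r IH]; first by rewrite ann_pair_cre_skew ann_vacuum linear0 add0r muln1.
rewrite [iter r.+2 _ _]/= ann_pair_cre_skew IH linearZ /= -row_cre_pair_cre.
by rewrite -scalerDl -natrD; congr (_%:R *: _); rewrite [RHS]mulnSr.
Qed.

Lemma homogeneous_pair_cre_iter r : homogeneous (2 * r)%N (iter r pair_cre vac).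
Proof.
elim: r => [|r IH]; first exact: homogeneous_vacuum.
move=> S nS; rewrite /= sum_ffunE big1 // => i _; rewrite sum_ffunE big1 // => j _.
rewrite fockZE (homogeneous_cre i (homogeneous_cre j IH)) ?mulr0 //.
by move: nS; rewrite mulnS.
Qed.

Definition pair_gaussian : F :=
  \sum_(r < m./2.+1) ((2 ^ r * r`!)%:R^-1 : C) *: iter r pair_cre vac.

Lemma row_cre_top k : row_cre k (iter m./2 pair_cre vac) = 0.
Proof.
have top_vanishes : iter m./2.+1 pair_cre vac = 0.
  apply: homogeneous_eq0 (@homogeneous_pair_cre_iter m./2.+1).
  by rewrite -[m in (m < _)%N]odd_double_half -addnn; case: odd; lia.
have /eqP := ann_pair_cre_iter k m./2.
by rewrite top_vanishes linear0 eq_sym scaler_eq0 pnatr_eq0 => /eqP.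
Qed.

Lemma ann_pair_gaussian k : ann k pair_gaussian = row_cre k pair_gaussian.
Proof.
rewrite /pair_gaussian !linear_sum big_ord_recl [RHS]big_ord_recr /=.
rewrite !linearZ /= ann_vacuum row_cre_top !scaler0 add0r addr0.
apply: eq_bigr => r _; rewrite !linearZ /= /bump add1n add0n.
by rewrite -[pair_cre _]/(iter r.+1 pair_cre vac) ann_pair_cre_iter scalerA gaussian_coefS.
Qed.

Lemma pair_gaussian_annihilated (z : 'I_m -> C) :
  \sum_i (\sum_j A i j * z j) *: cre i pair_gaussian + \sum_k z k *: ann k pair_gaussian = 0.
Proof.
under [X in _ + X]eq_bigr do rewrite ann_pair_gaussian /row_cre scaler_sumr.
rewrite [X in _ + X]exchange_big -big_split big1 // => i _ /=.
rewrite scaler_suml -big_split big1 // => j _ /=.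
by rewrite scalerA -scalerDl (A_skew i j) mulrN [A i j * _]mulrC addrN scale0r.
Qed.

End PairCreation.

Local Open Scope complex_scope.

Section HermitianForm.
Variables (R : realType) (m : nat) (D J : 'M[R]_(m + m)).
Local Notation V := 'cV[R]_(m + m).
Local Notation d := (dform D).
Local Notation herm := (herm D J).

Lemma dformDl (u u' v : V) : d (u + u') v = d u v + d u' v.
Proof. by rewrite /dform linearD !mulmxDl mxE. Qed.

Lemma dformZl c (u v : V) : d (c *: u) v = c * d u v.
Proof. by rewrite /dform linearZ -!scalemxAl mxE. Qed.

Lemma dformNl (u v : V) : d (- u) v = - d u v.
Proof. by rewrite -scaleN1r dformZl mulN1r. Qed.

Lemma dformDr (u v v' : V) : d u (v + v') = d u v + d u v'.
Proof. by rewrite /dform mulmxDr mxE. Qed.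

Lemma dformZr c (u v : V) : d u (c *: v) = c * d u v.
Proof. by rewrite /dform -!scalemxAr mxE. Qed.

Lemma dformNr (u v : V) : d u (- v) = - d u v.
Proof. by rewrite -scaleN1r dformZr mulN1r. Qed.

Hypotheses (D_sym : D^T = D) (hJ : compl_struct D J).

Lemma dform_sym (u v : V) : d u v = d v u.
Proof.
rewrite /dform; transitivity ((u^T *m D *m v)^T 0 0); first by rewrite [in RHS]mxE.
by rewrite !trmx_mul trmxK D_sym mulmxA.
Qed.

Lemma J_invol (u : V) : J *m (J *m u) = - u.
Proof. by rewrite mulmxA hJ.1 mulNmx mul1mx. Qed.

Lemma dformJJ (u v : V) : d (J *m u) (J *m v) = d u v.
Proof. exact: hJ.2. Qed.

Lemma dformJl (u v : V) : d (J *m u) v = - d u (J *m v).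
Proof.
have {1}-> : v = - (J *m (J *m v)) by rewrite J_invol opprK.
by rewrite dformNr dformJJ.
Qed.

(* [hermE] spells the imaginary unit of [complex] as 'i%C, as [herm] does: the
   ring_scope 'i is Num.imaginary, which is only convertible to it. *)
Lemma hermE (x y : V) : herm x y = (d x y)%:C + 'i%C * (d (J *m x) y)%:C.
Proof. by []. Qed.

Lemma hermDl (x x' y : V) : herm (x + x') y = herm x y + herm x' y.
Proof. rewrite !hermE mulmxDr !dformDl !rmorphD; ring. Qed.

Lemma hermDr (x y y' : V) : herm x (y + y') = herm x y + herm x y'.
Proof. rewrite !hermE !dformDr !rmorphD; ring. Qed.

Lemma hermZl c (x y : V) : herm (c *: x) y = c%:C * herm x y.
Proof. rewrite !hermE -scalemxAr !dformZl !rmorphM; ring. Qed.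

Lemma hermZr c (x y : V) : herm x (c *: y) = c%:C * herm x y.
Proof. rewrite !hermE !dformZr !rmorphM; ring. Qed.

Lemma hermNr (x y : V) : herm x (- y) = - herm x y.
Proof. by rewrite -scaleN1r hermZr rmorphN1 mulN1r. Qed.

Lemma hermJl (x y : V) : herm (J *m x) y = - 'i%C * herm x y.
Proof.
by rewrite !hermE J_invol dformNl; apply/eqP; rewrite eq_complex /=; simpc.
Qed.

Lemma hermJr (x y : V) : herm x (J *m y) = 'i%C * herm x y.
Proof.
rewrite !hermE dformJJ -[d x (J *m y)]opprK -dformJl.
by apply/eqP; rewrite eq_complex /=; simpc.
Qed.

Lemma herm_sumr (x : V) I (r : seq I) (P : pred I) (G : I -> V) :
  herm x (\sum_(i <- r | P i) G i) = \sum_(i <- r | P i) herm x (G i).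
Proof.
have herm0r : herm x 0 = 0 by rewrite -(scale0r (0 : V)) hermZr rmorph0 mul0r.
exact: (big_morph (herm x) (hermDr x) herm0r).
Qed.

Variable e : 'I_m -> V.
Hypothesis he : fk_orthonormal D J e.

Lemma dform_basis i j : d (e i) (e j) = (i == j)%:R.
Proof. by have /eqP := he i j; rewrite hermE eq_complex /=; simpc => /andP [/eqP -> _]; case: eqP. Qed.

Lemma dformJ_basis i j : d (J *m e i) (e j) = 0.
Proof. by have /eqP := he i j; rewrite hermE eq_complex /=; simpc => /andP [_ /eqP ->]; case: eqP. Qed.

Definition real_basis (c : 'I_(m + m)) : V :=
  match split c with inl j => e j | inr j => J *m e j end.

Definition real_basis_mx : 'M[R]_(m + m) := \matrix_(r, c) real_basis c r 0.

Lemma real_basis_mxE k (N : 'M[R]_(m + m, k)) a b :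
  (real_basis_mx^T *m D *m N) a b = d (real_basis a) (col b N).
Proof.
rewrite /dform !mxE; apply: eq_bigr => l _; rewrite !mxE; congr (_ * _).
by apply: eq_bigr => l' _; rewrite !mxE.
Qed.

Lemma real_basis_orthonormal : real_basis_mx^T *m D *m real_basis_mx = 1%:M.
Proof.
apply/matrixP => a b; rewrite real_basis_mxE mxE.
have -> : col b real_basis_mx = real_basis b by apply/matrixP => r s; rewrite !mxE (ord1 s).
rewrite /real_basis; case: (split_ordP a) => a' ->; case: (split_ordP b) => b' ->.
- by rewrite eq_lshift dform_basis.
- by rewrite eq_lrshift -[LHS]opprK -dformJl dformJ_basis oppr0.
- by rewrite eq_rlshift dformJ_basis.
- by rewrite eq_rshift dformJJ dform_basis.
Qed.

Lemma orthonormal_expansion (u : V) :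
  u = \sum_j (d (e j) u *: e j + d (J *m e j) u *: (J *m e j)).
Proof.
have {1}-> : u = real_basis_mx *m (real_basis_mx^T *m D *m u).
  by rewrite mulmxA (mulmx1C real_basis_orthonormal) mul1mx.
have -> : forall w : V, real_basis_mx *m w = \sum_c w c 0 *: real_basis c.
  move=> w; apply/matrixP => r s; rewrite (ord1 s) !mxE summxE.
  by apply: eq_bigr => c _; rewrite !mxE mulrC.
rewrite big_split_ord /= -big_split /=; apply: eq_bigr => j _.
rewrite !real_basis_mxE !col_id /real_basis.
by rewrite -[lshift m j]/(unsplit (inl j)) -[rshift m j]/(unsplit (inr j)) !unsplitK.
Qed.

Section SkewAntilinear.
Variable T : 'M[R]_(m + m).
Hypotheses (TJ : T *m J = - (J *m T)) (T_skew : forall x y : V, d (T *m x) y = - d x (T *m y)).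

Definition herm_coef i j := herm (e i) (T *m e j).

Lemma TJ_anticomm (x : V) : T *m (J *m x) = - (J *m (T *m x)).
Proof. by rewrite mulmxA TJ mulNmx mulmxA. Qed.

Lemma herm_coef_skew i j : herm_coef j i = - herm_coef i j.
Proof.
have dT : d (e j) (T *m e i) = - d (e i) (T *m e j) by rewrite dform_sym T_skew.
have dJT : d (J *m e j) (T *m e i) = - d (J *m e i) (T *m e j).
  by rewrite dform_sym T_skew TJ_anticomm dformNr dformJl !opprK.
rewrite /herm_coef !hermE dT dJT !rmorphN; ring.
Qed.

Lemma herm_antilinear_expansion i (u : V) :
  herm (e i) (T *m u) = \sum_j herm_coef i j * herm u (e j).
Proof.
rewrite {1}(orthonormal_expansion u) mulmx_sumr herm_sumr; apply: eq_bigr => j _.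
rewrite mulmxDr -!scalemxAr hermDr !hermZr TJ_anticomm hermNr hermJr /herm_coef.
rewrite (hermE u) (dform_sym u) (dformJl u) (dform_sym u (J *m e j)) !rmorphN; ring.
Qed.

End SkewAntilinear.

End HermitianForm.

Section Bogoliubov.
Variables (R : realType) (m : nat) (D J g : 'M[R]_(m + m)).
Hypotheses (hJ : compl_struct D J) (g_orth : forall u v, dform D (g *m u) (g *m v) = dform D u v).
Hypothesis p_unit : p_of J g \in unitmx.
Local Notation V := 'cV[R]_(m + m).
Local Notation d := (dform D).
Local Notation p := (p_of J g).
Local Notation q := (q_of J g).

Lemma mulmxJJ k (X : 'M[R]_(k, m + m)) : X *m J *m J = - X.
Proof. by rewrite -mulmxA hJ.1 mulmxN mulmx1. Qed.

Lemma mulJJmx k (X : 'M[R]_(m + m, k)) : J *m J *m X = - X.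
Proof. by rewrite hJ.1 mulNmx mul1mx. Qed.

Lemma p_of_J : p *m J = J *m p.
Proof.
rewrite /p_of -scalemxAl -scalemxAr mulmxBl mulmxBr !mulmxA mulmxJJ mulJJmx mulNmx.
by rewrite !opprK addrC.
Qed.

Lemma q_of_J : q *m J = - (J *m q).
Proof.
rewrite /q_of -scalemxAl -scalemxAr mulmxDl mulmxDr !mulmxA mulmxJJ mulJJmx mulNmx.
by rewrite -scalerN opprD opprK addrC.
Qed.

Lemma T_of_J : T_of J g *m J = - (J *m T_of J g).
Proof.
have invpJ : invmx p *m J = J *m invmx p.
  rewrite -[LHS]mulmx1 -(mulmxV p_unit) !mulmxA -(mulmxA _ J p) -p_of_J !mulmxA.
  by rewrite mulVmx // mul1mx.
by rewrite /T_of -mulmxA invpJ mulmxA q_of_J mulNmx mulmxA.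
Qed.

Lemma p_ofE (a : V) : p *m a = 2^-1 *: (g *m a - J *m (g *m (J *m a))).
Proof. by rewrite /p_of -scalemxAl mulmxBl !mulmxA. Qed.

Lemma q_ofE (a : V) : q *m a = 2^-1 *: (g *m a + J *m (g *m (J *m a))).
Proof. by rewrite /q_of -scalemxAl mulmxDl !mulmxA. Qed.

Lemma T_of_pE (a : V) : T_of J g *m (p *m a) = q *m a.
Proof. by rewrite /T_of mulmxA mulmxKV. Qed.

Lemma T_of_skew (x y : V) : d (T_of J g *m x) y = - d x (T_of J g *m y).
Proof.
have {1 2}-> : x = p *m (invmx p *m x) by rewrite mulmxA mulmxV // mul1mx.
have {1 2}-> : y = p *m (invmx p *m y) by rewrite mulmxA mulmxV // mul1mx.
rewrite !T_of_pE !q_ofE !p_ofE; move: (invmx p *m x) (invmx p *m y) => a b.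
rewrite !(dformZl, dformZr, dformDl, dformDr, dformNl, dformNr) (dformJJ hJ) !g_orth.
rewrite (dformJJ hJ); ring.
Qed.

End Bogoliubov.

Section FockCoordinates.
Variables (R : realType) (m : nat) (D J : 'M[R]_(m + m)) (e : 'I_m -> 'cV[R]_(m + m)).
Hypotheses (hJ : compl_struct D J) (he : fk_orthonormal D J e).
Local Notation V := 'cV[R]_(m + m).
Local Notation herm := (herm D J).

Lemma fscaleE c (x : Fock R m) : fscale c x = c *: x.
Proof. by apply/ffunP => U; rewrite !ffunE. Qed.

Lemma embed_basis i : embed D J e (e i) = fock_basis R i.
Proof.
apply/ffunP => S; rewrite !ffunE (bigD1 i) //= he eqxx mulr1 big1 ?addr0 // => k ki.
by rewrite he (negbTE ki) mulr0.
Qed.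

Lemma creationE (x : V) y : creation D J e x y = \sum_i herm (e i) x *: cre i y.
Proof.
rewrite /creation; have -> : embed D J e x = \sum_i herm (e i) x *: fock_basis R i.
  apply/ffunP => S; rewrite sum_ffunE ffunE; apply: eq_bigr => i _.
  by rewrite fockZE ffunE mulrC.
by rewrite wedge_suml; apply: eq_bigr => i _; rewrite wedgeZl.
Qed.

Lemma annihilationE (x : V) y : annihilation D J e x y = \sum_k herm x (e k) *: ann k y.
Proof.
apply/ffunP => U; rewrite sum_ffunE ffunE big_mkcond; apply: eq_bigr => k _.
by rewrite fockZE annE /sign_below; case: (k \notin U) => /=; ring.
Qed.

Lemma a_KE (K : 'M[R]_(m + m)) (w : V) y : a_K D J e K w y =
  \sum_i herm (e i) (2^-1 *: (w + J *m (K *m w))) *: cre i y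
  + \sum_k herm (2^-1 *: (w - J *m (K *m w))) (e k) *: ann k y.
Proof.
have half : (2^-1 : R)%:C = 2^-1 by rewrite fmorphV rmorph_nat.
have cre_coef i : herm (e i) (2^-1 *: (w + J *m (K *m w))) =
    2^-1 * (herm (e i) w + 'i%C * herm (e i) (K *m w)).
  by rewrite hermZr hermDr (hermJr hJ) half.
have ann_coef k : herm (2^-1 *: (w - J *m (K *m w))) (e k) =
    2^-1 * (herm w (e k) + 'i%C * herm (K *m w) (e k)).
  by rewrite hermZl hermDl -scaleN1r hermZl (hermJl hJ) half rmorphN1 mulN1r mulNr opprK.
under [in RHS]eq_bigr do rewrite cre_coef -scalerA scalerDl -scalerA scalerDr.
under [X in _ = _ + X]eq_bigr do rewrite ann_coef -scalerA scalerDl -scalerA scalerDr.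
rewrite /a_K /field !fscaleE !creationE !annihilationE.
rewrite !scalerDr !scaler_sumr addrACA.
by congr (_ + _); rewrite -big_split /=.
Qed.

Lemma wedge_H_T T y : wedge (H_T D J e T) y = pair_cre (herm_coef D J e T) y.
Proof.
rewrite /H_T wedge_suml; apply: eq_bigr => i _; rewrite wedge_suml.
by apply: eq_bigr => j _; rewrite fscaleE wedgeZl !embed_basis wedge_cre_basis.
Qed.

Lemma gaussianE T : gaussian D J e T = pair_gaussian (herm_coef D J e T).
Proof.
apply: eq_bigr => r _; rewrite fscaleE; congr (_ *: _).
by rewrite /wpow; elim: (nat_of_ord r) => //= n ->; rewrite wedge_H_T.
Qed.

End FockCoordinates.

Theorem lemma4p6 (R : realType) (m : nat) (D J g : 'M[R]_(m + m))
  (e : 'I_m -> 'cV[R]_(m + m)) :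
  pos_def_sym D -> compl_struct D J -> fk_orthonormal D J e ->
  in_SOstar D J g ->
  forall v : 'cV[R]_(m + m),
    a_K D J e (g *m J *m invmx g) (g *m v) (gaussian D J e (T_of J g)) = 0.
Proof.
move=> [D_sym _] hJ he [[g_orth det_g] p_unit] v.
have g_unit : g \in unitmx by rewrite unitmxE det_g unitr1.
have TJ := T_of_J hJ p_unit.
have T_skew := T_of_skew hJ g_orth p_unit.
rewrite a_KE // gaussianE //.
have -> : g *m J *m invmx g *m (g *m v) = g *m (J *m v) by rewrite !mulmxA mulmxKV.
rewrite -q_ofE -p_ofE -(T_of_pE p_unit).
under eq_bigr do rewrite (herm_antilinear_expansion D_sym hJ he TJ).
apply: pair_gaussian_annihilated.
exact: (herm_coef_skew D_sym hJ e TJ T_skew).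
Qed.
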